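(* Let $\Gamma$, $\varphi$, $\Xi$, $(\cdot)^\flat$ and $\mathscr{M}$ be as in the context. For every $\xi\in\Xi$, every base $\mathscr{X}\supseteq\mathscr{M}$ and every finite multiset of atoms $U$: $\Vdash^{U}_{\mathscr{X}}\xi^\flat$ if and only if $\Vdash^{U}_{\mathscr{X}}\xi$.
   Context: Fix a countably infinite set $\mathbb{A}$ of atoms. IMLL formulas: $\varphi::= p\in\mathbb{A}\mid\varphi\otimes\varphi\mid \mathrm{I}\mid\varphi\multimap\varphi$; multisets are finite, ''$,$'' is multiset union. An atomic rule is $(P_1\triangleright p_1,\dots,P_n\triangleright p_n)\Rightarrow p$ ($n\ge0$, $P_i$ finite multisets of atoms, $\triangleright p$ abbreviating $\emptyset\triangleright p$); a base is a set of atomic rules. Derivability $\vdash_{\mathscr{B}}$ is the least relation with (Ref) $[p]\vdash_{\mathscr{B}}p$; (App) if $(P_1\triangleright p_1,\dots,P_n\triangleright p_n)\Rightarrow p\in\mathscr{B}$ and $S_i,P_i\vdash_{\mathscr{B}}p_i$ for all $i$, then $S_1,\dots,S_n\vdash_{\mathscr{B}}p$. Support: (At) $\Vdash^{P}_{\mathscr{B}}p$ iff $P\vdash_{\mathscr{B}}p$; ($\otimes$) $\Vdash^{P}_{\mathscr{B}}\varphi\otimes\psi$ iff for every $\mathscr{X}\supseteq\mathscr{B}$, multiset of atoms $U$, atom $p$, if $\varphi,\psi\Vdash^{U}_{\mathscr{X}}p$ then $\Vdash^{P,U}_{\mathscr{X}}p$; ($\mathrm{I}$) $\Vdash^{P}_{\mathscr{B}}\mathrm{I}$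 iff for every $\mathscr{X}\supseteq\mathscr{B}$, $U$, $p$, if $\Vdash^{U}_{\mathscr{X}}p$ then $\Vdash^{P,U}_{\mathscr{X}}p$; ($\multimap$) $\Vdash^{P}_{\mathscr{B}}\varphi\multimap\psi$ iff $\varphi\Vdash^{P}_{\mathscr{B}}\psi$; (comma) for nonempty $\Gamma,\Delta$, $\Vdash^{P}_{\mathscr{B}}\Gamma,\Delta$ iff $P=U,V$ for some $U,V$ with $\Vdash^{U}_{\mathscr{B}}\Gamma$, $\Vdash^{V}_{\mathscr{B}}\Delta$ (singleton $[\varphi]$ supported iff $\varphi$ is); (Inf) for nonempty $\Gamma$, $\Gamma\Vdash^{P}_{\mathscr{B}}\varphi$ iff for every $\mathscr{X}\supseteq\mathscr{B}$ and $U$, if $\Vdash^{U}_{\mathscr{X}}\Gamma$ then $\Vdash^{P,U}_{\mathscr{X}}\varphi$. Fix a finite multiset $\Gamma$ and formula $\varphi$; $\Xi$ is the set of all subformulas of formulas in $\Gamma$ and of $\varphi$. $(\cdot)^\flat:\Xi\to\mathbb{A}$ is an injection with $p^\flat=p$ for atoms $p\in\Xi$ and, for non-atomic $\xi$, $\xi^\flat$ an atom not occurring in $\Xi$. The base $\mathscr{M}$ consists of: for each $\sigma\multimap\tau\in\Xi$, $(\sigma^\flat\triangleright\tau^\flat)\Rightarrow(\sigma\multimap\tau)^\flat$ and $(\triangleright(\sigma\multimap\tau)^\flat,\triangleright\sigma^\flat)\Rightarrow\tau^\flat$; for each $\sigma\otimes\tau\in\Xi$, $(\triangleright\sigma^\flat,\triangleright\tau^\flat)\Rightarrow(\sigma\otimes\tau)^\flat$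 and, for every atom $p$, $(\triangleright(\sigma\otimes\tau)^\flat,\ \sigma^\flat,\tau^\flat\triangleright p)\Rightarrow p$; if $\mathrm{I}\in\Xi$, $\Rightarrow\mathrm{I}^\flat$ and, for every atom $p$, $(\triangleright\mathrm{I}^\flat,\triangleright p)\Rightarrow p$. *)

From Stdlib Require List.
From mathcomp Require Import all_boot.
From mathcomp Require Import finmap multiset.

Set Implicit Arguments.
Unset Strict Implicit.
Unset Printing Implicit Defensive.

Local Open Scope mset_scope.

Definition atom := nat.

Definition amset := {mset atom}.

Inductive form : Type :=
  | Atom of atom
  | Tensor of form & form
  | One
  | Lolli of form & form.

Inductive subform : form -> form -> Prop :=
  | sub_refl phi : subform phi phi
  | sub_tensorl a b phi : subform phi a -> subform phi (Tensor a b)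
  | sub_tensorr a b phi : subform phi b -> subform phi (Tensor a b)
  | sub_lollil a b phi : subform phi a -> subform phi (Lolli a b)
  | sub_lollir a b phi : subform phi b -> subform phi (Lolli a b).

(* Atomic rules (P_1 |> p_1, ..., P_n |> p_n) => p. *)
Record arule := ARule { prems : seq (amset * atom); concl : atom }.

Definition base := arule -> Prop.

Definition extends (X B : base) : Prop := forall r, B r -> X r.

(* Derivability S |-_B p, with an auxiliary relation for the premises:
   derivs B ps S means S = S_1,...,S_n with S_i,P_i |-_B p_i. *)
Inductive deriv (B : base) : amset -> atom -> Prop :=
  | d_ref p : deriv B [mset p] p
  | d_app r S : B r -> derivs B (prems r) S -> deriv B S (concl r)
with derivs (B : base) : seq (amset * atom) -> amset -> Prop :=
  | ds_nil : derivs B [::] mset0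
  | ds_cons P q ps S T :
      deriv B (S `+` P) q -> derivs B ps T -> derivs B ((P, q) :: ps) (S `+` T).

Fixpoint supp (B : base) (P : amset) (phi : form) {struct phi} : Prop :=
  match phi with
  | Atom p => deriv B P p
  | Tensor a b =>
      forall (X : base) (U : amset) (p : atom), extends X B ->
        (* a, b ||-^U_X p *)
        (forall (Y : base) (V : amset), extends Y X ->
           (exists V1 V2, V = V1 `+` V2 /\ supp Y V1 a /\ supp Y V2 b) ->
           deriv Y (U `+` V) p) ->
        deriv X (P `+` U) p
  | One =>
      forall (X : base) (U : amset) (p : atom), extends X B ->
        deriv X U p -> deriv X (P `+` U) p
  | Lolli a b =>
      (* a ||-^P_B b *)
      forall (X : base) (U : amset), extends X B ->
        supp X U a -> supp X (P `+` U) b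
  end.

Definition inXi (Gamma : seq form) (phi : form) (xi : form) : Prop :=
  subform xi phi \/ exists2 g, Stdlib.Lists.List.In g Gamma & subform xi g.

Definition flat_ok (Gamma : seq form) (phi : form) (flat : form -> atom) : Prop :=
  (forall x y, inXi Gamma phi x -> inXi Gamma phi y -> flat x = flat y -> x = y) /\
  (forall p, inXi Gamma phi (Atom p) -> flat (Atom p) = p) /\
  (forall x, inXi Gamma phi x -> (forall p, x <> Atom p) ->
     ~ inXi Gamma phi (Atom (flat x))).

Definition baseM (Gamma : seq form) (phi : form) (flat : form -> atom) : base :=
  fun r =>
    (exists s t, inXi Gamma phi (Lolli s t) /\
       (r = ARule [:: ([mset flat s], flat t)] (flat (Lolli s t)) \/
        r = ARule [:: (mset0, flat (Lolli s t)); (mset0, flat s)] (flat t)))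
    \/
    (exists s t, inXi Gamma phi (Tensor s t) /\
       (r = ARule [:: (mset0, flat s); (mset0, flat t)] (flat (Tensor s t)) \/
        exists p : atom,
          r = ARule [:: (mset0, flat (Tensor s t)); ([mset flat s; flat t], p)] p))
    \/
    (inXi Gamma phi One /\
       (r = ARule [::] (flat One) \/
        exists p : atom, r = ARule [:: (mset0, flat One); (mset0, p)] p)).

From Pilot Require Import Defs.
From mathcomp Require Import all_boot.
From mathcomp Require Import finmap multiset.

(* The proof is by induction on xi.
   - Atoms are their own proxies.
   - For each connective, M contains an introduction rule producing the proxy
     from the proxies of the immediate subformulas, and an elimination rule
     going back.  Given faithfulness of the proxies of the subformulas, these
     two rules yield faithfulness of the proxy of the compound formula; the
     elimination rules for tensor and I are "general" (any conclusion p),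
     which is what matches the universal clauses of the support semantics. *)

Set Implicit Arguments.
Local Open Scope mset_scope.

Scheme deriv_ind2 := Induction for deriv Sort Prop
with derivs_ind2 := Induction for derivs Sort Prop.

Lemma deriv_mono (B X : base) : extends X B ->
  forall S p, deriv B S p -> deriv X S p.
Proof.
move=> hX.
apply: (@deriv_ind2 B (fun S p _ => deriv X S p) (fun ps S _ => derivs X ps S)).
- by move=> p; apply: d_ref.
- by move=> r S Br _ h; apply: d_app; [apply: hX|].
- exact: ds_nil.
- by move=> P q ps S T _ h1 _ h2; apply: ds_cons.
Qed.

Lemma extends_trans (X Y Z : base) : extends X Y -> extends Y Z -> extends X Z.
Proof. by move=> h1 h2 r /h2 /h1. Qed.

Lemma deriv_rule0 (X : base) c : X (ARule [::] c) -> deriv X mset0 c.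
Proof. by move=> h; apply: (d_app h (ds_nil X)). Qed.

Lemma deriv_rule1 (X : base) P q c S : X (ARule [:: (P, q)] c) ->
  deriv X (S `+` P) q -> deriv X S c.
Proof.
by move=> h h1; have := d_app h (ds_cons h1 (ds_nil X)); rewrite msetD0.
Qed.

Lemma deriv_rule2 (X : base) P1 q1 P2 q2 c S1 S2 :
  X (ARule [:: (P1, q1); (P2, q2)] c) ->
  deriv X (S1 `+` P1) q1 -> deriv X (S2 `+` P2) q2 -> deriv X (S1 `+` S2) c.
Proof.
move=> h h1 h2; have := d_app h (ds_cons h1 (ds_cons h2 (ds_nil X))).
by rewrite msetD0.
Qed.

Definition faithful (M : base) (a : atom) (xi : form) : Prop :=
  forall (X : base) (U : amset), extends X M -> (deriv X U a <-> supp X U xi).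

Lemma faithful_atom (M : base) p : faithful M p (Atom p).
Proof. by []. Qed.

Section FaithfulSteps.

Variable M : base.
Variables (s t : form) (a b c : atom).
Hypotheses (fa : faithful M a s) (fb : faithful M b t).

Lemma faithful_tensor :
  M (ARule [:: (mset0, a); (mset0, b)] c) ->
  (forall p, M (ARule [:: (mset0, c); ([mset a; b], p)] p)) ->
  faithful M c (Tensor s t).
Proof.
move=> hintro helim X U hX; split.
- move=> hU Y W p hY hW.
  apply: (@deriv_rule2 Y mset0 c [mset a; b] p p); first exact/hY/hX/helim.
  + by rewrite msetD0; apply: deriv_mono hU.
  + apply: hW => //; exists [mset a], [mset b]; split => //.
    have hYM := extends_trans hY hX.
    by split; [apply/(fa _ hYM)|apply/(fb _ hYM)]; apply: d_ref.
- move=> hU; have := hU X mset0 c (fun r h => h).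
  rewrite msetD0; apply => Z V hZ [V1 [V2 [-> [h1 h2]]]].
  have hZM := extends_trans hZ hX.
  rewrite mset0D; apply: (@deriv_rule2 Z mset0 a mset0 b); first exact/hZM.
  + by rewrite msetD0; apply/(fa _ hZM).
  + by rewrite msetD0; apply/(fb _ hZM).
Qed.

Lemma faithful_lolli :
  M (ARule [:: ([mset a], b)] c) ->
  M (ARule [:: (mset0, c); (mset0, a)] b) ->
  faithful M c (Lolli s t).
Proof.
move=> hintro helim X U hX; split.
- move=> hU Y V hY hV; have hYM := extends_trans hY hX.
  apply/(fb _ hYM); apply: (@deriv_rule2 Y mset0 c mset0 a); first exact/hYM.
  + by rewrite msetD0; apply: deriv_mono hU.
  + by rewrite msetD0; apply/(fa _ hYM).
- move=> hU; apply: (@deriv_rule1 X [mset a] b); first exact/hX.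
  by apply/(fb _ hX); apply: hU => //; apply/(fa _ hX); apply: d_ref.
Qed.

End FaithfulSteps.

Lemma faithful_one (M : base) (c : atom) :
  M (ARule [::] c) -> (forall p, M (ARule [:: (mset0, c); (mset0, p)] p)) ->
  faithful M c One.
Proof.
move=> hintro helim X U hX; split.
- move=> hU Y W p hY hW.
  apply: (@deriv_rule2 Y mset0 c mset0 p p); first exact/hY/hX/helim.
  + by rewrite msetD0; apply: deriv_mono hU.
  + by rewrite msetD0.
- move=> hU; have := hU X mset0 c (fun r h => h).
  by rewrite msetD0; apply; apply/deriv_rule0/hX.
Qed.

Lemma subform_trans x y z : subform x y -> subform y z -> subform x z.
Proof. by move=> hxy hyz; elim: hyz hxy => //; intros; constructor; auto. Qed.

Lemma inXi_sub G f x y : inXi G f y -> subform x y -> inXi G f x.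
Proof.
case=> [h|[g hg h]] hs; [left|right]; first exact: subform_trans hs h.
by exists g => //; apply: subform_trans hs h.
Qed.

Lemma inXi_tensor G f s t : inXi G f (Tensor s t) -> inXi G f s /\ inXi G f t.
Proof.
by move=> h; split; apply: inXi_sub h _;
  [apply: sub_tensorl|apply: sub_tensorr]; exact: Defs.sub_refl.
Qed.

Lemma inXi_lolli G f s t : inXi G f (Lolli s t) -> inXi G f s /\ inXi G f t.
Proof.
by move=> h; split; apply: inXi_sub h _;
  [apply: sub_lollil|apply: sub_lollir]; exact: Defs.sub_refl.
Qed.

Theorem mainTheorem14 (Gamma : seq form) (phi : form) (flat : form -> atom) :
  flat_ok Gamma phi flat ->
  forall xi : form, inXi Gamma phi xi ->
  forall (X : base) (U : amset), extends X (baseM Gamma phi flat) ->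
    (supp X U (Atom (flat xi)) <-> supp X U xi).
Proof.
move=> [_ [flat_atom _]].
suff: forall xi, inXi Gamma phi xi ->
  faithful (baseM Gamma phi flat) (flat xi) xi by [].
elim=> [p|s IHs t IHt||s IHs t IHt] hxi.
- by rewrite flat_atom //; apply: faithful_atom.
- have [hs ht] := inXi_tensor hxi.
  apply: faithful_tensor; [exact: IHs|exact: IHt| |].
  + by right; left; exists s, t; split => //; left.
  + by move=> p; right; left; exists s, t; split => //; right; exists p.
- apply: faithful_one => [|p]; right; right; split => //; first by left.
  by right; exists p.
- have [hs ht] := inXi_lolli hxi.
  apply: faithful_lolli; [exact: IHs|exact: IHt| |].
  + by left; exists s, t; split => //; left.
  + by left; exists s, t; split => //; right.
Qed.
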